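(* Let $(S,+)$ be an infinite commutative semigroup admitting a family $(A_x)_{x\in S}$ of finite subsets of $S$ such that for every $x\in S$: $x\in A_x$; $x\notin S+(S\setminus A_x)$; and $|S\setminus\{y\in S : A_x\subseteq A_y\}|<|S|$. Let $M\subseteq S$ with $|M|=|S|$, and for each $x\in M$ let $B_x\subseteq S$ satisfy $B_x\subseteq A_x\subseteq B_x+B_x$. Then every diagonal $D$ of the family $(B_x)_{x\in M}$ satisfies $D+D=S$. Moreover, if $s\in\mathbb{N}\cup\{\infty\}$ and $s(B_x)\le s$ for all $x\in M$, then $s(D)\le s$.
   Context: For $X,Y\subseteq S$, $X+Y=\{u+v: u\in X, v\in Y\}$. A set $D$ is a diagonal of the family $(B_x)_{x\in M}$ if for every finite set $F$, the set $\{x\in M : F\cap D=F\cap B_x\}$ has cardinality $|M|$. For $X\subseteq S$ and $n\in S$, $r(X,n)=|\{(u,v)\in X\times X : u+v=n\}|$ and $s(X)=\sup_{n\in S} r(X,n)$. *)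

From HB Require Import structures.
From mathcomp Require Import all_boot all_order all_algebra.
From mathcomp Require Import all_classical.
Set Implicit Arguments.
Unset Strict Implicit.
Unset Printing Implicit Defensive.
Local Open Scope classical_set_scope.
Local Open Scope card_scope.

Definition setadd {S : Type} (add : S -> S -> S) (X Y : set S) : set S :=
  [set w | exists u v, X u /\ Y v /\ add u v = w].

Definition is_diagonal {S : Type} (M : set S) (B : S -> set S) (D : set S) : Prop :=
  forall F : set S, finite_set F ->
    [set x | M x /\ F `&` D = F `&` B x] #= M.

(* the set of representations {(u,v) in X×X : u+v = n}; r(X,n) is its cardinal *)
Definition reps {S : Type} (add : S -> S -> S) (X : set S) (n : S) : set (S * S) :=
  [set p | X p.1 /\ X p.2 /\ add p.1 p.2 = n].

(* s(X) <= s with s in N ∪ {∞} encoded as option nat (None = ∞):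
   sup_n r(X,n) <= s  iff  r(X,n) <= s for every n. *)
Definition s_le {S : Type} (add : S -> S -> S) (X : set S) (s : option nat) : Prop :=
  match s with
  | None => True
  | Some k => forall n : S, reps add X n #<= `I_k
  end.

From HB Require Import structures.
From mathcomp Require Import all_boot all_order all_algebra.
From mathcomp Require Import all_classical.
Set Implicit Arguments.
Unset Strict Implicit.
Unset Printing Implicit Defensive.

Local Open Scope classical_set_scope.
Local Open Scope card_scope.

(* Since n is not in S + (S \ A_n), both summands of any representation
   n = u + v lie in A_n; hence whether n lies in X + X, and how often, depends
   only on the trace A_n ∩ X.  By diagonality A_n ∩ D = A_n ∩ B_x for |S| many
   x in M, while fewer than |S| points y fail A_n ⊆ A_y; so some such x has
   n ∈ A_n ⊆ A_x ⊆ B_x + B_x, and the representations of n in D are exactly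
   those in B_x. *)

Lemma setT_card_le_nonempty (T : Type) (X : set T) (t : T) :
  [set: T] #<= X -> exists x, X x.
Proof.
move=> le_TX; apply: contrapT => noX.
have X0 : X = set0 by apply/seteqP; split=> // x Xx; apply: noX; exists x.
by move: le_TX; rewrite X0 => /card_le0P T0; have : [set: T] t by []; rewrite T0.
Qed.

Lemma setaddE (S : Type) (add : S -> S -> S) (X : set S) (n : S) :
  setadd add X X n <-> exists p, reps add X n p.
Proof.
split=> [[u [v [Xu [Xv uv]]]]|[[u v] [Xu [Xv uv]]]]; first by exists (u, v).
by exists u, v.
Qed.

Section Traces.
Variables (S : Type) (add : S -> S -> S) (A : S -> set S).
Hypothesis addC : forall a b, add a b = add b a.
Hypothesis Anot : forall x, ~ setadd add [set: S] (~` A x) x.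

Lemma summand_in_A (n u v : S) : add u v = n -> A n u.
Proof.
move=> uv; apply: contrapT => nAu; apply: (@Anot n).
by exists v, u; rewrite addC.
Qed.

Lemma reps_sub_trace (X Y : set S) (n : S) :
  A n `&` X `<=` Y -> reps add X n `<=` reps add Y n.
Proof.
move=> sub_XY [u v] /= [Xu [Xv uv]].
have Au : A n u := summand_in_A uv.
have Av : A n v by apply: (summand_in_A (u := v) (v := u)); rewrite addC.
by split; [|split]; [apply: sub_XY|apply: sub_XY|].
Qed.

Lemma setadd_trace (X Y : set S) (n : S) :
  A n `&` X `<=` Y -> setadd add X X n -> setadd add Y Y n.
Proof.
move=> sub_XY /setaddE [p Xp]; apply/setaddE.
by exists p; apply: (reps_sub_trace sub_XY).
Qed.

Variables (M : set S) (B : S -> set S) (D : set S).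
Hypothesis Afin : forall x, finite_set (A x).
Hypothesis HM : M #= [set: S].
Hypothesis HD : is_diagonal M B D.

Lemma diagonal_trace_agrees_large (n : S) :
  [set: S] #<= [set x | M x /\ A n `&` D = A n `&` B x].
Proof.
move: (HD (Afin n)) HM => /card_eqPle [_ le_MX] /card_eqPle [_ le_TM].
exact: card_le_trans le_TM le_MX.
Qed.

Lemma diagonal_trace_agrees_above
    (Asmall : forall x, ~ ([set: S] #<= ~` [set y | A x `<=` A y])) (n : S) :
  exists x, [/\ M x, A n `&` D = A n `&` B x & A n `<=` A x].
Proof.
apply: contrapT => nox; apply: (@Asmall n).
apply: card_le_trans (diagonal_trace_agrees_large n) _.
by apply: subset_card_le => x [Mx DB] Anx; apply: nox; exists x.
Qed.

End Traces.

Theorem mainTheorem7 (S : Type) (add : S -> S -> S)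
  (addA : forall a b c, add a (add b c) = add (add a b) c)
  (addC : forall a b, add a b = add b a)
  (Sinf : infinite_set [set: S])
  (A : S -> set S)
  (Afin : forall x, finite_set (A x))
  (Ax : forall x, A x x)
  (Anot : forall x, ~ setadd add [set: S] (~` A x) x)
  (Asmall : forall x, ~ ([set: S] #<= ~` [set y | A x `<=` A y]))
  (M : set S) (HM : M #= [set: S])
  (B : S -> set S)
  (HBA : forall x, M x -> B x `<=` A x)
  (HAB : forall x, M x -> A x `<=` setadd add (B x) (B x)) :
  forall D : set S, is_diagonal M B D ->
    setadd add D D = [set: S] /\
    (forall s : option nat, (forall x, M x -> s_le add (B x) s) -> s_le add D s).
Proof.
move=> D HD; split.
  apply/seteqP; split=> // n _.
  have [x [Mx DB AnAx]] := diagonal_trace_agrees_above Afin HM HD Asmall n.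
  apply: (setadd_trace addC Anot (X := B x)); first by rewrite -DB => ? [].
  exact/HAB/AnAx/Ax.
case=> [k|] //= Hs n.
have [x [Mx DB]] := setT_card_le_nonempty n
  (diagonal_trace_agrees_large Afin HM HD n).
apply: card_le_trans (Hs x Mx n); apply/subset_card_le/(reps_sub_trace addC Anot).
by rewrite DB => ? [].
Qed.
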